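(* Let $X,Y,Z$ be random variables on finite alphabets $\mathcal{X},\mathcal{Y},\mathcal{Z}$. For each $y\in\mathcal{Y}$ with $\Pr(Y=y)>0$, let $(A_y,B_y,C_y)$ be the random triple on $\mathcal{X}\times\mathcal{Y}\times\mathcal{Z}$ with $\Pr(A_y=x,B_y=y',C_y=z)=0$ if $\Pr(Z=z)=0$ and $\Pr(A_y=x,B_y=y',C_y=z)=\Pr(X=x,Y=y',Z=z)\Pr(Z=z\mid Y=y)/\Pr(Z=z)$ otherwise. Let $A_{Z|Y}$ be a random variable on $\mathcal{X}$, jointly distributed with $Y$, such that $\Pr(A_{Z|Y}=x,Y=y)=\Pr(Y=y)\Pr(A_y=x)$ for all $x\in\mathcal{X}$ and all $y$ with $\Pr(Y=y)>0$. Let $\operatorname{Un}(X\to Z\mid Y)=\sum_{y:\Pr(Y=y)>0}\Pr(Y=y)I(A_y;C_y)$ and $\operatorname{Red}(X,Y\to Z)=I(X;Z)-\operatorname{Un}(X\to Z\mid Y)$. Then $\operatorname{Red}(X,Y\to Z)=I(A_{Z|Y};Y)$.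
   Context: $I$ denotes mutual information. *)

From HB Require Import structures.
From mathcomp Require Import all_boot all_order all_algebra.
From mathcomp Require Import reals exp.
Set Implicit Arguments. Unset Strict Implicit. Unset Printing Implicit Defensive.
Import Order.TTheory GRing.Theory Num.Theory.
Local Open Scope ring_scope.

Section Defs.
Variable R : realType.

Definition is_pmf (T : finType) (p : T -> R) :=
  (forall t, 0 <= p t) /\ \sum_(t : T) p t = 1.

Definition mutinfo (A B : finType) (p : A -> B -> R) : R :=
  \sum_(a : A) \sum_(b : B)
     (if 0 < p a b then
        p a b * ln (p a b / ((\sum_(b' : B) p a b') * (\sum_(a' : A) p a' b)))
      else 0).

Variables (X Y Z : finType) (P : X -> Y -> Z -> R).

Definition pY (y : Y) : R := \sum_(x : X) \sum_(z : Z) P x y z.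
Definition pZ (z : Z) : R := \sum_(x : X) \sum_(y : Y) P x y z.
Definition pYZ (y : Y) (z : Z) : R := \sum_(x : X) P x y z.
Definition pXZ (x : X) (z : Z) : R := \sum_(y : Y) P x y z.

Definition condZY (z : Z) (y : Y) : R := pYZ y z / pY y.

Definition Qtriple (y : Y) (x : X) (y' : Y) (z : Z) : R :=
  if pZ z == 0 then 0 else P x y' z * condZY z y / pZ z.

Definition QAC (y : Y) (x : X) (z : Z) : R := \sum_(y' : Y) Qtriple y x y' z.

Definition QA (y : Y) (x : X) : R := \sum_(y' : Y) \sum_(z : Z) Qtriple y x y' z.

Definition Un : R := \sum_(y : Y | 0 < pY y) pY y * mutinfo (QAC y).

Definition Red : R := mutinfo pXZ - Un.

End Defs.

From HB Require Import structures.
From mathcomp Require Import all_boot all_order all_algebra.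
From mathcomp Require Import reals exp.
From mathcomp Require Import ring.
Set Implicit Arguments. Unset Strict Implicit. Unset Printing Implicit Defensive.
Import Order.TTheory GRing.Theory Num.Theory.
Local Open Scope ring_scope.

(* Writing p(x|z) for the law of X given Z, the law of (A_y, C_y) is
   p(x|z) p(z|y): A_y is the output of the channel Z -> X fed with the law of
   Z given Y = y.  Hence I(A_y;C_y) = H(A_y) - sum_z p(z|y) H(X|Z=z), and
   averaging over y (sum_y p(y) p(z|y) = p(z)) gives
   Un = sum_y p(y) H(A_y) - H(X|Z).  As I(X;Z) = H(X) - H(X|Z), we get
   Red = H(X) - sum_y p(y) H(A_y), which is I(A_{Z|Y};Y) because A_{Z|Y} has
   law A_y given Y = y, and hence marginal law that of X. *)

Section Entropy.
Variable R : realType.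

Definition xlnx (t : R) := t * ln t.

Definition entropy (T : finType) (p : T -> R) := - \sum_t xlnx (p t).

Lemma xlnxM (a b : R) : 0 <= a -> 0 <= b ->
  xlnx (a * b) = xlnx a * b + a * xlnx b.
Proof.
rewrite le0r => /orP[/eqP->|a_gt0]; first by rewrite /xlnx !mul0r addr0.
rewrite le0r => /orP[/eqP->|b_gt0]; first by rewrite /xlnx !(mulr0, mul0r) addr0.
by rewrite /xlnx lnM ?posrE //; ring.
Qed.

Lemma ler_sum_term (I : finType) (F : I -> R) i :
  (forall j, 0 <= F j) -> F i <= \sum_j F j.
Proof. by move=> F_ge0; rewrite (bigD1 i) //= lerDl sumr_ge0. Qed.

Lemma sum_pos_weight (I : finType) (w F : I -> R) : (forall i, 0 <= w i) ->
  \sum_(i | 0 < w i) w i * F i = \sum_i w i * F i.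
Proof.
move=> w_ge0; rewrite big_mkcond; apply: eq_bigr => i _.
have [//|wi_le0] := ltP 0 (w i).
have -> : w i = 0 by apply/le_anti; rewrite wi_le0 w_ge0.
by rewrite mul0r.
Qed.

Lemma eq_entropy (T : finType) (p q : T -> R) : p =1 q -> entropy p = entropy q.
Proof. by move=> pq; rewrite /entropy (eq_bigr _ (fun t _ => congr1 xlnx (pq t))). Qed.

Lemma eq_mutinfo (A B : finType) (p q : A -> B -> R) :
  (forall a b, p a b = q a b) -> mutinfo p = mutinfo q.
Proof.
move=> pq; rewrite /mutinfo; apply: eq_bigr => a _; apply: eq_bigr => b _.
by rewrite pq (eq_bigr _ (fun b' _ => pq a b')) (eq_bigr _ (fun a' _ => pq a' b)).
Qed.

Lemma mutinfoE (A B : finType) (q : A -> B -> R) : (forall a b, 0 <= q a b) ->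
  mutinfo q = entropy (fun a => \sum_b q a b) + entropy (fun b => \sum_a q a b)
              + \sum_a \sum_b xlnx (q a b).
Proof.
move=> q_ge0.
have termE a b : (if 0 < q a b then
      q a b * ln (q a b / ((\sum_b' q a b') * \sum_a' q a' b)) else 0)
    = xlnx (q a b) - q a b * ln (\sum_b' q a b') - q a b * ln (\sum_a' q a' b).
  have [q_gt0|q_le0] := ltP 0 (q a b); last first.
    have -> : q a b = 0 by apply/le_anti; rewrite q_le0 q_ge0.
    by rewrite /xlnx !mul0r !subr0.
  have row_gt0 : 0 < \sum_b' q a b' by apply: lt_le_trans q_gt0 (ler_sum_term _ _).
  have col_gt0 : 0 < \sum_a' q a' b by apply: lt_le_trans q_gt0 (ler_sum_term _ _).
  by rewrite /xlnx ln_div ?lnM ?posrE ?mulr_gt0 //; ring.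
have rowE : \sum_a \sum_b q a b * ln (\sum_b' q a b') = \sum_a xlnx (\sum_b q a b).
  by apply: eq_bigr => a _; rewrite -mulr_suml.
have colE : \sum_a \sum_b q a b * ln (\sum_a' q a' b) = \sum_b xlnx (\sum_a q a b).
  by rewrite exchange_big; apply: eq_bigr => b _; rewrite -mulr_suml.
rewrite /mutinfo; under eq_bigr do under eq_bigr do rewrite termE.
under eq_bigr do rewrite !sumrB.
by rewrite !sumrB rowE colE /entropy; ring.
Qed.

Lemma mutinfo_condE (A B : finType) (u : A -> B -> R) (w : B -> R) :
  (forall a b, 0 <= u a b) -> (forall b, 0 <= w b) ->
  (forall b, \sum_a u a b * w b = w b) ->
  mutinfo (fun a b => u a b * w b)
  = entropy (fun a => \sum_b u a b * w b) - \sum_b w b * entropy (u^~ b).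
Proof.
move=> u_ge0 w_ge0 w_marg.
rewrite mutinfoE => [|a b]; last exact: mulr_ge0.
have colE : entropy (fun b => \sum_a u a b * w b) = entropy w.
  by apply: eq_entropy => b; rewrite w_marg.
have condE : \sum_a \sum_b xlnx (u a b) * w b = - \sum_b w b * entropy (u^~ b).
  rewrite exchange_big -sumrN; apply: eq_bigr => b _.
  by rewrite /entropy mulrN opprK mulr_sumr; apply: eq_bigr => a _; rewrite mulrC.
have crossE : \sum_a \sum_b u a b * xlnx (w b) = - entropy w.
  rewrite exchange_big /entropy opprK; apply: eq_bigr => b _.
  by under eq_bigr do rewrite /xlnx mulrA; rewrite -mulr_suml w_marg.
under eq_bigr do under eq_bigr do rewrite xlnxM //.
under eq_bigr do rewrite big_split /=.
by rewrite big_split /= colE condE crossE; ring.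
Qed.

End Entropy.

Section ChannelDecomposition.
Variables (R : realType) (X Y Z : finType) (P : X -> Y -> Z -> R).
Hypothesis P_ge0 : forall x y z, 0 <= P x y z.

Definition condXZ (x : X) (z : Z) : R := pXZ P x z / pZ P z.

Lemma pXZ_ge0 x z : 0 <= pXZ P x z. Proof. exact: sumr_ge0. Qed.
Lemma pYZ_ge0 y z : 0 <= pYZ P y z. Proof. exact: sumr_ge0. Qed.
Lemma pY_ge0 y : 0 <= pY P y. Proof. by do 2!apply: sumr_ge0 => ? _. Qed.
Lemma pZ_ge0 z : 0 <= pZ P z. Proof. by do 2!apply: sumr_ge0 => ? _. Qed.

Lemma condXZ_ge0 x z : 0 <= condXZ x z.
Proof. by rewrite divr_ge0 ?pXZ_ge0 ?pZ_ge0. Qed.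
Lemma condZY_ge0 z y : 0 <= condZY P z y.
Proof. by rewrite divr_ge0 ?pYZ_ge0 ?pY_ge0. Qed.

Lemma pZ_sum_pYZ z : pZ P z = \sum_y pYZ P y z.
Proof. exact: exchange_big. Qed.
Lemma pY_sum_pYZ y : pY P y = \sum_z pYZ P y z.
Proof. exact: exchange_big. Qed.

Lemma condXZ_mul_pZ x z : condXZ x z * pZ P z = pXZ P x z.
Proof.
have [pZ0|pZ_neq0] := eqVneq (pZ P z) 0; last by rewrite /condXZ divfK.
rewrite pZ0 mulr0; symmetry.
by apply: (psumr_eq0P (F := pXZ P ^~ z) _ pZ0) => // ? _; apply: pXZ_ge0.
Qed.

Lemma condZY_mul_pY z y : condZY P z y * pY P y = pYZ P y z.
Proof.
have [pY0|pY_neq0] := eqVneq (pY P y) 0; last by rewrite /condZY divfK.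
rewrite pY0 mulr0; symmetry; move: pY0; rewrite pY_sum_pYZ => pY0.
by apply: (psumr_eq0P _ pY0) => // ? _; apply: pYZ_ge0.
Qed.

(* Where Pr(Z = z) = 0 the conditional law p(.|z) is junk, but then also
   Pr(Z = z | Y = y) = 0. *)
Lemma sum_condXZ_mul_condZY y z :
  \sum_x condXZ x z * condZY P z y = condZY P z y.
Proof.
rewrite -mulr_suml; have [pZ0|pZ_neq0] := eqVneq (pZ P z) 0.
  suff pYZ0 : pYZ P y z = 0 by rewrite /condZY pYZ0 !mul0r mulr0.
  move: pZ0; rewrite pZ_sum_pYZ => pZ0.
  by apply: (psumr_eq0P _ pZ0) => // ? _; apply: pYZ_ge0.
by rewrite /condXZ -mulr_suml divff // mul1r.
Qed.

Lemma sum_condZY_mul_pY z : \sum_y condZY P z y * pY P y = pZ P z.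
Proof. by rewrite pZ_sum_pYZ; apply: eq_bigr => y _; apply: condZY_mul_pY. Qed.

Lemma QACE y x z : QAC P y x z = condXZ x z * condZY P z y.
Proof.
rewrite /QAC /Qtriple /condXZ /pXZ.
have [pZ0|pZ_neq0] := eqVneq (pZ P z) 0.
  by rewrite big1 ?pZ0 ?invr0 ?mulr0 ?mul0r // => y' _; rewrite pZ0 eqxx.
by rewrite !mulr_suml; apply: eq_bigr => y' _; ring.
Qed.

Lemma QAE y x : QA P y x = \sum_z condXZ x z * condZY P z y.
Proof. by rewrite /QA exchange_big; apply: eq_bigr => z _; apply: QACE. Qed.

Lemma QA_ge0 y x : 0 <= QA P y x.
Proof. by rewrite QAE sumr_ge0 // => z _; rewrite mulr_ge0 ?condXZ_ge0 ?condZY_ge0. Qed.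

Lemma sum_QA_mul_pY x : \sum_y QA P y x * pY P y = \sum_z pXZ P x z.
Proof.
under eq_bigr do rewrite QAE mulr_suml.
rewrite exchange_big; apply: eq_bigr => z _.
rewrite -condXZ_mul_pZ -sum_condZY_mul_pY mulr_sumr.
by apply: eq_bigr => y _; rewrite mulrA.
Qed.

Lemma mutinfo_pXZ : mutinfo (pXZ P) =
  entropy (fun x => \sum_z pXZ P x z) - \sum_z pZ P z * entropy (condXZ^~ z).
Proof.
rewrite (@eq_mutinfo _ _ _ _ (fun x z => condXZ x z * pZ P z)); last first.
  by move=> x z; rewrite condXZ_mul_pZ.
rewrite mutinfo_condE.
- by congr (_ - _); apply: eq_entropy => x; under eq_bigr do rewrite condXZ_mul_pZ.
- exact: condXZ_ge0.
- exact: pZ_ge0.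
- by move=> z; under eq_bigr do rewrite condXZ_mul_pZ.
Qed.

Lemma mutinfo_QAC y : mutinfo (QAC P y) =
  entropy (QA P y) - \sum_z condZY P z y * entropy (condXZ^~ z).
Proof.
rewrite (eq_mutinfo (QACE y)) mutinfo_condE.
- by congr (_ - _); apply: eq_entropy => x; rewrite QAE.
- exact: condXZ_ge0.
- by move=> z; apply: condZY_ge0.
- exact: sum_condXZ_mul_condZY.
Qed.

Lemma UnE : Un P =
  \sum_y pY P y * entropy (QA P y) - \sum_z pZ P z * entropy (condXZ^~ z).
Proof.
rewrite /Un sum_pos_weight; last exact: pY_ge0.
under eq_bigr do rewrite mutinfo_QAC mulrBr mulr_sumr.
rewrite sumrB exchange_big; congr (_ - _); apply: eq_bigr => z _.
by rewrite -sum_condZY_mul_pY mulr_suml; apply: eq_bigr => y _; ring.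
Qed.

Lemma RedE : Red P =
  entropy (fun x => \sum_z pXZ P x z) - \sum_y pY P y * entropy (QA P y).
Proof. by rewrite /Red mutinfo_pXZ UnE; ring. Qed.

End ChannelDecomposition.

Theorem lemma6 (R : realType) (X Y Z : finType) (P : X -> Y -> Z -> R)
  (AZY : X -> Y -> R) :
  is_pmf (fun t : X * Y * Z => P t.1.1 t.1.2 t.2) ->
  is_pmf (fun t : X * Y => AZY t.1 t.2) ->
  (forall y : Y, \sum_(x : X) AZY x y = pY P y) ->
  (forall (x : X) (y : Y), 0 < pY P y -> AZY x y = pY P y * QA P y x) ->
  Red P = mutinfo AZY.
Proof.
move=> [P_ge0 _] [AZY_ge0 _] AZY_marg AZY_cond.
have {}P_ge0 x y z : 0 <= P x y z := P_ge0 (x, y, z).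
have {}AZY_ge0 x y : 0 <= AZY x y := AZY_ge0 (x, y).
have AZYE x y : AZY x y = QA P y x * pY P y.
  have [pY_gt0|pY_le0] := ltP 0 (pY P y); first by rewrite AZY_cond // mulrC.
  have pY0 : pY P y = 0 by apply/le_anti; rewrite pY_le0 pY_ge0.
  have col0 : \sum_x AZY x y = 0 by rewrite AZY_marg.
  by rewrite pY0 mulr0; apply: (psumr_eq0P _ col0).
rewrite (RedE P_ge0) (eq_mutinfo AZYE) mutinfo_condE.
- by rewrite (eq_entropy (sum_QA_mul_pY P_ge0)).
- by move=> x y; apply: QA_ge0.
- exact: pY_ge0.
- by move=> y; under eq_bigr do rewrite -AZYE.
Qed.
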